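(* There is no correct translation from SYNCSIMPLE into $\mathrm{LOCKSIMPLE}_{1,IS}$, for either initial store $IS = (\Box)$ or $IS = (\blacksquare)$.
   Context: SYNCSIMPLE: subprocesses $\mathcal{U} ::= \checkmark \mid 0 \mid\ !\mathcal{U} \mid\ ?\mathcal{U}$; processes are finite parallel compositions $\mathcal{U}_1 \mid \cdots \mid \mathcal{U}_n$ (parallel composition is associative, commutative, with $0$ as identity). The only reduction is $!\mathcal{U}_1 \mid ?\mathcal{U}_2 \mid \mathcal{P} \to \mathcal{U}_1 \mid \mathcal{U}_2 \mid \mathcal{P}$. A process is successful if it has the form $\checkmark \mid \mathcal{P}$. $\mathrm{LOCKSIMPLE}_{k,IS}$ (here $k=1$): subprocesses $\mathcal{U} ::= 0 \mid \checkmark \mid P_i\mathcal{U} \mid T_i\mathcal{U}$ ($1\le i\le k$), processes are parallel compositions of subprocesses. Execution acts on states $(\mathcal{P},\mathcal{C})$ with locks $C_i\in\{\Box \text{ (empty)},\blacksquare \text{ (full)}\}$, starting from the initial store $IS$. Rules: $(P_i\mathcal{U}\mid\mathcal{P},\mathcal{C}[C_i=\Box]) \to (\mathcal{U}\mid\mathcal{P},\mathcal{C}[C_i\mapsto\blacksquare])$ (so $P_i$ blocks on a full lock), and $(T_i\mathcal{U}\mid\mathcal{P},\mathcal{C}) \to (\mathcal{U}\mid\mathcal{P},\mathcal{C}[C_i\mapsto\Box])$ (take never blocks). A state is successful if its process contains a top-level $\checkmark$. In both calculi, a process (state) is may-convergent if some reduction sequence reaches a successful process (state), and must-convergent if every process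 (state) reachable from it is may-convergent. A translation is a mapping $\tau$ from SYNCSIMPLE-processes to $\mathrm{LOCKSIMPLE}_{k,IS}$-processes; it is compositional if $\tau(0)=0$, $\tau(\checkmark)=\checkmark$, $\tau(\mathcal{P}_1\mid\mathcal{P}_2)=\tau(\mathcal{P}_1)\mid\tau(\mathcal{P}_2)$, $\tau(\mathcal{U})$ contains no parallel operator, and $\tau(!\mathcal{U})=\tau(!)\tau(\mathcal{U})$, $\tau(?\mathcal{U})=\tau(?)\tau(\mathcal{U})$. It is correct if for every SYNCSIMPLE-process $P$: $P$ is may-convergent iff $\tau(P)$ is, and $P$ is must-convergent iff $\tau(P)$ is. The translations considered in this result are compositional. *)

From Stdlib Require Import List Permutation Relation_Operators.
Import ListNotations.

Inductive sU : Type :=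
  | STick : sU
  | SZero : sU
  | SSend : sU -> sU
  | SRecv : sU -> sU.

(* processes: finite parallel compositions, represented as lists;
   associativity/commutativity is handled by Permutation in the rules,
   0 is inert. *)
Definition sproc := list sU.

Definition sstep (P Q : sproc) : Prop :=
  exists U1 U2 R,
    Permutation P (SSend U1 :: SRecv U2 :: R) /\ Q = U1 :: U2 :: R.

Definition ssuccessful (P : sproc) : Prop := In STick P.

Definition sreach := clos_refl_trans sproc sstep.

Definition smay (P : sproc) : Prop :=
  exists Q, sreach P Q /\ ssuccessful Q.

Definition smust (P : sproc) : Prop :=
  forall Q, sreach P Q -> smay Q.

(* subprocesses U ::= 0 | ✓ | P_1 U | T_1 U   (k = 1, index omitted) *)
Inductive lU : Type :=
  | LZero : lU
  | LTick : lU
  | LPut  : lU -> lU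
  | LTake : lU -> lU.

Definition lproc := list lU.

(* lock contents: false = empty (□), true = full (■) *)
Definition store := bool.
Definition lstate := (lproc * store)%type.

Inductive lstep : lstate -> lstate -> Prop :=
  | lstep_put : forall P U R,
      Permutation P (LPut U :: R) ->
      lstep (P, false) (U :: R, true)
  | lstep_take : forall P U R c,
      Permutation P (LTake U :: R) ->
      lstep (P, c) (U :: R, false).

Definition lsuccessful (s : lstate) : Prop := In LTick (fst s).

Definition lreach := clos_refl_trans lstate lstep.

Definition lmay (s : lstate) : Prop :=
  exists t, lreach s t /\ lsuccessful t.

Definition lmust (s : lstate) : Prop :=
  forall t, lreach s t -> lmay t.

(* lock actions used to form the prefix τ(!) or τ(?) *)
Inductive lact : Type := APut | ATake.

Definition act_prefix (a : lact) (U : lU) : lU :=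
  match a with APut => LPut U | ATake => LTake U end.

Definition prefix (w : list lact) (U : lU) : lU :=
  fold_right act_prefix U w.

(* It is compositional if it acts componentwise on parallel compositions
   through a subprocess map ts (so τ(U) has no parallel operator),
   with τ(0)=0, τ(✓)=✓, τ(!U)=τ(!)τ(U), τ(?U)=τ(?)τ(U). *)
Definition compositional (tau : sproc -> lproc) : Prop :=
  exists (ts : sU -> lU) (wsend wrecv : list lact),
    ts STick = LTick /\
    ts SZero = LZero /\
    (forall U, ts (SSend U) = prefix wsend (ts U)) /\
    (forall U, ts (SRecv U) = prefix wrecv (ts U)) /\
    (forall P, tau P = map ts P).

Definition correct (IS : store) (tau : sproc -> lproc) : Prop :=
  forall P : sproc,
    (smay P <-> lmay (tau P, IS)) /\ (smust P <-> lmust (tau P, IS)).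

(* A compositional translation is fixed by the lock-action words w! = tau(!) and
   w? = tau(?).  If w! began with a put, run w? greedily from the initial store:
   either it completes, and then tau(?✓) may-converges although ?✓ does not, or it
   blocks on a put with the lock full, and then ?0 | !✓, which is must-convergent,
   is translated into a state reaching the deadlock P(..) | P(..) with a full lock.
   So w! is empty or begins with a take.  Then in the translation of
   !✓ | !0 | ... | !0 (length w! copies of !0, a deadlocked process without ✓) the
   translated !0's are spare takes that empty the lock whenever a put of w! would
   block, so tau(!✓) can always be run down to ✓. *)

From Stdlib Require Import List Permutation Relation_Operators Operators_Properties Lia.
Import ListNotations.

Lemma clos_rt_normal_form {A : Type} (R : A -> A -> Prop) (x y : A) :
  (forall z, ~ R x z) -> clos_refl_trans A R x y -> y = x.
Proof.
  intros Hnf Hxy. apply clos_rt_rt1n_iff in Hxy.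
  destruct Hxy as [|x' z Hx' _]; [reflexivity|].
  exfalso. exact (Hnf _ Hx').
Qed.

Lemma sstep_send_recv (P Q : sproc) :
  sstep P Q -> (exists U, In (SSend U) P) /\ (exists U, In (SRecv U) P).
Proof.
  intros [U1 [U2 [R [Hperm _]]]]. apply Permutation_sym in Hperm.
  split; [exists U1 | exists U2]; apply (Permutation_in _ Hperm); simpl; auto.
Qed.

Lemma smay_normal_form (P : sproc) :
  (forall Q, ~ sstep P Q) -> smay P -> ssuccessful P.
Proof.
  intros Hnf [Q [HPQ HQ]]. rewrite (clos_rt_normal_form _ _ _ Hnf HPQ) in HQ. exact HQ.
Qed.

Definition handshake : sproc := [SRecv SZero; SSend STick].

Lemma sstep_handshake_or_tick (P Q : sproc) :
  sstep P Q -> P = handshake \/ In STick P -> In STick Q.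
Proof.
  intros [U1 [U2 [R [Hperm ->]]]] [-> | HP].
  - assert (Hin : In (SSend U1) handshake).
    { apply Permutation_sym in Hperm. apply (Permutation_in _ Hperm). simpl; auto. }
    destruct Hin as [H | [H | []]]; [discriminate|].
    injection H as <-. simpl; auto.
  - apply (Permutation_in _ Hperm) in HP.
    destruct HP as [H | [H | H]]; [discriminate | discriminate | simpl; auto].
Qed.

Lemma smust_handshake : smust handshake.
Proof.
  assert (Hinv : forall P Q, sreach P Q -> P = handshake \/ In STick P ->
                             Q = handshake \/ In STick Q).
  { intros P Q HPQ. induction HPQ; eauto using sstep_handshake_or_tick. }
  intros Q HQ. destruct (Hinv _ _ HQ (or_introl eq_refl)) as [-> | Htick].
  - exists [STick; SZero]. split.
    + apply rt_step. exists STick, SZero, []. split; [apply perm_swap | reflexivity].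
    + apply in_eq.
  - exists Q. split; [apply rt_refl | exact Htick].
Qed.

Lemma lstep_full_take (P : lproc) (t : lstate) :
  lstep (P, true) t -> exists U, In (LTake U) P.
Proof.
  intros Hstep. inversion Hstep as [| P' U R c Hperm]; subst.
  exists U. apply Permutation_sym in Hperm. apply (Permutation_in _ Hperm). simpl; auto.
Qed.

Lemma lmay_normal_form (s : lstate) :
  (forall t, ~ lstep s t) -> lmay s -> lsuccessful s.
Proof.
  intros Hnf [t [Hst Ht]]. rewrite (clos_rt_normal_form _ _ _ Hnf Hst) in Ht. exact Ht.
Qed.

Fixpoint run (w : list lact) (c : store) : list lact * store :=
  match w with
  | [] => ([], c)
  | ATake :: w' => run w' false
  | APut :: w' => if c then (w, true) else run w' true
  end.

Lemma lreach_run (w : list lact) (c : store) (U : lU) (R : lproc) :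
  lreach (prefix w U :: R, c) (prefix (fst (run w c)) U :: R, snd (run w c)).
Proof.
  revert c. induction w as [|[] w IH]; intros c; simpl.
  - apply rt_refl.
  - destruct c; simpl; [apply rt_refl|].
    eapply rt_trans; [apply rt_step, lstep_put, Permutation_refl | apply IH].
  - eapply rt_trans; [apply rt_step, lstep_take, Permutation_refl | apply IH].
Qed.

Lemma run_cases (w : list lact) (c : store) :
  (exists c', run w c = ([], c')) \/ (exists r, run w c = (APut :: r, true)).
Proof.
  revert c. induction w as [|[] w IH]; intros c; simpl; eauto.
  destruct c; eauto.
Qed.

(* A put on a full lock is enabled by first firing one of the spare takes. *)
Lemma lreach_prefix_spare_takes (w : list lact) (U V : lU) (k : nat) (R : lproc) (c : store) :
  length w <= k ->
  exists R' c', lreach (prefix w U :: repeat (LTake V) k ++ R, c) (U :: R', c').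
Proof.
  revert U V k R c. induction w as [|[] w IH]; intros U V k R c Hk; simpl in *.
  - eexists _, _. apply rt_refl.
  - destruct k as [|k]; [lia|]. destruct c.
    + destruct (IH U V k (V :: R) true ltac:(lia)) as [R' [c' Hreach]].
      exists R', c'.
      eapply rt_trans.
      { apply rt_step.
        apply (lstep_take _ V (LPut (prefix w U) :: repeat (LTake V) k ++ R)).
        apply perm_swap. }
      eapply rt_trans; [apply rt_step, lstep_put | exact Hreach].
      eapply perm_trans; [apply perm_swap|]. apply perm_skip, Permutation_middle.
    + destruct (IH U V (S k) R true ltac:(lia)) as [R' [c' Hreach]].
      exists R', c'.
      eapply rt_trans; [apply rt_step, lstep_put, Permutation_refl | exact Hreach].
  - destruct (IH U V k R false ltac:(lia)) as [R' [c' Hreach]].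
    exists R', c'.
    eapply rt_trans; [apply rt_step, lstep_take, Permutation_refl | exact Hreach].
Qed.

Section CompositionalTranslation.

Variables (IS : store) (ts : sU -> lU) (wsend wrecv : list lact).
Hypothesis ts_tick : ts STick = LTick.
Hypothesis ts_zero : ts SZero = LZero.
Hypothesis ts_send : forall U, ts (SSend U) = prefix wsend (ts U).
Hypothesis ts_recv : forall U, ts (SRecv U) = prefix wrecv (ts U).
Hypothesis ts_correct : correct IS (map ts).

Lemma run_recv_blocks : exists r, run wrecv IS = (APut :: r, true).
Proof.
  destruct (run_cases wrecv IS) as [[c Hrun] | Hblocks]; [exfalso | exact Hblocks].
  assert (Hmay : smay [SRecv STick]).
  { apply (proj2 (proj1 (ts_correct [SRecv STick]))).
    exists ([LTick], c). split; [|apply in_eq].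
    simpl. rewrite ts_recv, ts_tick.
    pose proof (lreach_run wrecv IS LTick []) as Hreach.
    rewrite Hrun in Hreach. exact Hreach. }
  apply smay_normal_form in Hmay.
  - destruct Hmay as [H | []]. discriminate.
  - intros Q HQ. destruct (proj1 (sstep_send_recv _ _ HQ)) as [U [H | []]].
    discriminate.
Qed.

Lemma wsend_cases : wsend = [] \/ exists w, wsend = ATake :: w.
Proof.
  destruct wsend as [|[] w] eqn:Hw; eauto. exfalso.
  destruct run_recv_blocks as [r Hrun].
  pose proof (proj1 (proj2 (ts_correct handshake)) smust_handshake) as Hmust.
  pose proof (lreach_run wrecv IS LZero [prefix wsend LTick]) as Hreach.
  rewrite Hrun in Hreach.
  assert (Hdeadlock : lmay ([LPut (prefix r LZero); LPut (prefix w LTick)], true)).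
  { apply Hmust. simpl. rewrite ts_recv, ts_send, ts_zero, ts_tick. rewrite Hw in Hreach. exact Hreach. }
  apply lmay_normal_form in Hdeadlock.
  - destruct Hdeadlock as [H | [H | []]]; discriminate.
  - intros t Ht. destruct (lstep_full_take _ _ Ht) as [U [H | [H | []]]]; discriminate.
Qed.

Lemma lmay_translated_sends :
  lmay (map ts (SSend STick :: repeat (SSend SZero) (length wsend)), IS).
Proof.
  simpl. rewrite map_repeat, !ts_send, ts_tick, ts_zero.
  destruct wsend_cases as [Hw | [w Hw]].
  - rewrite Hw. exists ([LTick], IS). split; [apply rt_refl | apply in_eq].
  - destruct (lreach_prefix_spare_takes wsend LTick (prefix w LZero) (length wsend) [] IS
                (le_n _)) as [R' [c' Hreach]].
    exists (LTick :: R', c'). split; [|apply in_eq].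
    rewrite app_nil_r, Hw in Hreach. rewrite Hw. exact Hreach.
Qed.

End CompositionalTranslation.

Theorem theorem3p2 :
  forall IS : store,
    ~ (exists tau : sproc -> lproc, compositional tau /\ correct IS tau).
Proof.
  intros IS [tau [[ts [wsend [wrecv [Htick [Hzero [Hsend [Hrecv Htau]]]]]]] Hcorrect]].
  assert (Hcorrect_map : correct IS (map ts)).
  { intros P. rewrite <- Htau. apply Hcorrect. }
  set (P := SSend STick :: repeat (SSend SZero) (length wsend)).
  assert (Hmay : smay P).
  { apply (proj2 (proj1 (Hcorrect_map P))).
    exact (lmay_translated_sends IS ts wsend wrecv Htick Hzero Hsend Hrecv Hcorrect_map). }
  assert (Hno_recv : forall U, ~ In (SRecv U) P).
  { intros U [H | H]; [discriminate|]. apply repeat_spec in H. discriminate. }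
  apply smay_normal_form in Hmay.
  - destruct Hmay as [H | H]; [discriminate|]. apply repeat_spec in H. discriminate.
  - intros Q HQ. destruct (proj2 (sstep_send_recv _ _ HQ)) as [U HU]. exact (Hno_recv U HU).
Qed.
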